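(* Let $b\ge3$, $D\subset\{0,\dots,b-1\}$ with $2\le|D|\le b$, list $\mathcal C=\mathcal C_{b,D}$ increasingly as $k_1<k_2<\cdots$, and let $s=\gcd\{d-d':d,d'\in D\}$. Consider $L(\alpha,\beta)=\lim_{N\to\infty}\frac1N\sum_{n=1}^N e(k_n\alpha+s_b(k_n)\beta)$. (1) If $s=1$, the limit exists for all real $\alpha,\beta$; if it is nonzero then there are integers $a,r,t$ with $\alpha\equiv\frac{a}{b-1}+\frac{r}{b^t}$ and $\beta\equiv-\frac{a}{b-1}\pmod 1$. (2) If $s>1$ and $s\mid d$ for all $d\in D$, the limit exists for all $\alpha,\beta$; if it is nonzero then there are integers $a,r,t$ with $s\alpha\equiv\frac{a}{b-1}+\frac{r}{b^t}$ and $s\beta\equiv-\frac{a}{b-1}\pmod 1$. (3) If $s>1$ and $s\nmid d$ for some $d\in D$, then for every $(\alpha,\beta)$ for which there are no integers $a,r,t$ with $s\alpha\equiv\frac{a}{b-1}+\frac{r}{b^t}$ and $s\beta\equiv-\frac{a}{b-1}\pmod 1$, the limit exists and equals $0$. Finally, if at least one of $\alpha,\beta$ is irrational, then $$\lim_{N-M\to\infty}\frac{1}{N-M}\sum_{M<n\le N}e(k_n\alpha+s_b(k_n)\beta)=0,$$ i.e. for every $\eta>0$ there is $L$ such that the average has modulus $<\eta$ whenever $0\le M<N$ and $N-M\ge L$.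
   Context: $\mathcal C_{b,D}=\{\sum_{j=0}^{k} d_j b^j : k\in\mathbb N_0,\ d_j\in D\}$. $s_b(k)$ is the base-$b$ sum of digits of $k$. $e(x)=e^{2\pi i x}$. The number $s$ is the largest integer such that $D$ is contained in an arithmetic progression of step $s$. *)

From mathcomp Require Import all_boot all_order all_algebra.
From mathcomp Require Import all_classical all_reals all_analysis.
From mathcomp Require Import complex.
Import Order.TTheory GRing.Theory Num.Theory.
Import numFieldNormedType.Exports.

Set Implicit Arguments.
Unset Strict Implicit.
Unset Printing Implicit Defensive.

Local Open Scope ring_scope.
Local Open Scope complex_scope.

Definition inC (b : nat) (D : {set 'I_b}) (m : nat) : Prop :=
  exists (kk : nat) (d : nat -> 'I_b),
    (forall j, (j <= kk)%N -> d j \in D) /\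
    m = (\sum_(j < kk.+1) (d j : nat) * b ^ j)%N.

(* s_b(m): base-b digit sum of m; digit i of m is (m / b^i) mod b, and for
   b >= 2 all nonzero digits have index i <= m. *)
Definition sdig (b m : nat) : nat := (\sum_(i < m.+1) (m %/ b ^ i %% b))%N.

(* s = gcd { d - d' : d, d' in D } (gcd of the absolute differences) *)
Definition sgcd (b : nat) (D : {set 'I_b}) : nat :=
  (\big[gcdn/0]_(d in D) \big[gcdn/0]_(d' in D) ((d - d') + (d' - d)))%N.

Definition e (R : realType) (x : R) : R[i] :=
  (cos (2 * pi * x) +i* sin (2 * pi * x)).

Definition term (R : realType) (b : nat) (k : nat -> nat) (alpha beta : R)
  (n : nat) : R[i] :=
  e ((k n)%:R * alpha + (sdig b (k n))%:R * beta).

(* the average (1/N) sum_{n=1}^N e(k_n alpha + s_b(k_n) beta),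
   with k_n written k (n-1) (the enumeration k is indexed from 0) *)
Definition avg (R : realType) (b : nat) (k : nat -> nat) (alpha beta : R)
  (N : nat) : (R[i])^o :=
  (N%:R)^-1 * \sum_(i < N) term b k alpha beta i.

Definition congr1 (R : realType) (x y : R) : Prop :=
  exists m : int, x = y + m%:~R.

Definition resonant (R : realType) (b : nat) (x y : R) : Prop :=
  exists a r t : int,
    congr1 x (a%:~R / (b%:R - 1) + r%:~R / (b%:R ^ t)) /\
    congr1 y (- (a%:~R / (b%:R - 1))).

From mathcomp Require Import all_boot all_order all_algebra.
From mathcomp Require Import all_classical all_reals all_analysis.
From mathcomp Require Import complex zify ring lra.
From Stdlib Require Import Classical.
Import Order.TTheory GRing.Theory Num.Theory.
Import numFieldNormedType.Exports.

Set Implicit Arguments.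
Unset Strict Implicit.

Local Open Scope ring_scope.
Local Open Scope complex_scope.
Local Open Scope classical_set_scope.

(* Cut the sum over [C] into windows [[p b^u, (p+1) b^u)] of elements with a
   common prefix [p]: the window sum of [e (m al + s_b(m) be)] factors as the
   Riesz product [prod_(j < u) F (b^j al + be)], [F x = sum_(d in D) e (d x)],
   and [|F| <= q = #|D|].  If the normalised products do not become small, then
   [|F (b^j al + be)| -> q]; comparing two digits shows [e (s (b^j al + be)) -> 1]
   for the gcd [s] of the digit differences, and along the affine orbit
   [x |-> b x + (1 - b) s be] this forces [s (al, be)] to be resonant.  Away from
   resonance the windows cancel, so the sums are [o(N - M)] uniformly in [M];
   irrational [(al, be)] are never resonant.  At resonance, if [s] divides all
   digits, the phases become constant on each window, so every full window
   contributes a fixed multiple [Lam] of its cardinality and the averages tend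
   to [Lam]. *)

Section Digits.
Variables (b : nat) (D : {set 'I_b}).
Hypothesis hb : (1 < b)%N.

Definition is_digit (n : nat) : bool := [exists d in D, (d : nat) == n].

Fixpoint Dword (u w : nat) : bool :=
  if u is u'.+1 then is_digit (w %% b) && Dword u' (w %/ b) else w == 0%N.

Let b_gt0 : (0 < b)%N. Proof. exact: ltnW. Qed.

Lemma modn_digit d y : (d < b)%N -> ((d + b * y) %% b = d)%N.
Proof. by move=> hd; rewrite addnC mulnC modnMDl modn_small. Qed.

Lemma divn_digit d y : (d < b)%N -> ((d + b * y) %/ b = y)%N.
Proof. by move=> hd; rewrite addnC mulnC divnMDl // divn_small // addn0. Qed.

Lemma digit_decomp x : x = (x %% b + b * (x %/ b))%N.
Proof. by rewrite {1}(divn_eq x b) addnC mulnC. Qed.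

Lemma Dword_lt u w : Dword u w -> (w < b ^ u)%N.
Proof.
elim: u w => [|u IH] w /=; first by move/eqP->.
case/andP=> _ /IH h; rewrite (digit_decomp w) expnS.
have := ltn_pmod w b_gt0; nia.
Qed.

Lemma DwordD u v x :
  Dword (u + v) x = Dword u (x %% b ^ u) && Dword v (x %/ b ^ u).
Proof.
elim: u x => [|u IH] x /=; first by rewrite expn0 modn1 divn1.
rewrite IH -andbA expnS; congr (_ && _).
  by rewrite modn_dvdm // dvdn_mulr.
rewrite divnMA; congr (_ && _); congr (Dword u _).
have hbu : (0 < b ^ u)%N by rewrite expn_gt0 b_gt0.
have hr := ltn_pmod x b_gt0; have hq := ltn_pmod (x %/ b) hbu.
set r := (x %% b)%N in hr *; set q := (x %/ b)%N in hq *.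
have ex : x = (q %/ b ^ u * (b * b ^ u) + (r + b * (q %% b ^ u)))%N.
  by rewrite {1}(digit_decomp x) -/r -/q {1}(divn_eq q (b ^ u)); ring.
by rewrite {1}ex modnMDl [in RHS]modn_small ?divn_digit //; nia.
Qed.

Lemma Dword_sum n (d : nat -> 'I_b) : (forall j, (j < n)%N -> d j \in D) ->
  Dword n (\sum_(j < n) (d j : nat) * b ^ j)%N.
Proof.
elim: n d => [|n IH] d hd /=; first by rewrite big_ord0.
rewrite big_ord_recl /= expn0 muln1.
have -> : (\sum_(i < n) d (bump 0 i) * b ^ bump 0 i
           = b * \sum_(i < n) d i.+1 * b ^ i)%N.
  by rewrite big_distrr; apply: eq_bigr => i _; rewrite /bump /= add1n expnS; ring.
rewrite modn_digit // divn_digit //.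
have -> : is_digit (d 0%N) by apply/existsP; exists (d 0%N); rewrite hd ?eqxx.
by apply: (IH (fun j => d j.+1)) => j hj; apply: hd.
Qed.

Lemma Dword_digits n m : Dword n m -> exists d : nat -> 'I_b,
  (forall j, (j < n)%N -> d j \in D) /\ m = (\sum_(j < n) (d j : nat) * b ^ j)%N.
Proof.
elim: n m => [|n IH] m /=.
  by move/eqP->; exists (fun _ => Ordinal b_gt0); rewrite big_ord0.
case/andP=> /existsP [d0 /andP [hd0 /eqP e0]] /IH [d' [hd' em]].
exists (fun j => if j is j'.+1 then d' j' else d0); split; first by case.
rewrite big_ord_recl /= expn0 muln1 e0 {1}(digit_decomp m) em; congr (_ + _)%N.
by rewrite big_distrr; apply: eq_bigr => i _; rewrite /bump /= add1n expnS; ring.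
Qed.

Lemma inCP m : inC D m <-> exists2 v, (0 < v)%N & Dword v m.
Proof.
split=> [[kk [d [hd ->]]]|[v hv /Dword_digits [d [hd em]]]].
  by exists kk.+1 => //; apply: Dword_sum => j; apply: hd.
by exists v.-1, d; rewrite prednK //; split=> // j hj; apply: hd; lia.
Qed.

Lemma inC_block p u w : (0 < p)%N -> (w < b ^ u)%N ->
  inC D (p * b ^ u + w) <-> inC D p /\ Dword u w.
Proof.
move=> hp hw.
have hmod : ((p * b ^ u + w) %% b ^ u = w)%N by rewrite modnMDl modn_small.
have hdiv : ((p * b ^ u + w) %/ b ^ u = p)%N
  by rewrite divnMDl ?expn_gt0 ?b_gt0 // divn_small // addn0.
rewrite !inCP; split=> [[v hv hW]|[[v hv hW] hw']].
  have huv : (u < v)%N.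
    rewrite -(ltn_exp2l _ _ hb); apply: leq_ltn_trans (Dword_lt hW).
    by apply: leq_trans (leq_addr _ _); rewrite leq_pmull.
  move: hW; rewrite -(subnKC (ltnW huv)) DwordD hmod hdiv => /andP [h1 h2].
  by split=> //; exists (v - u)%N; rewrite ?subn_gt0.
by exists (u + v)%N; rewrite ?addn_gt0 ?hv ?orbT // DwordD hmod hdiv hw' hW.
Qed.

Let dsum (n x : nat) : nat := (\sum_(i < n) (x %/ b ^ i %% b))%N.

Let dsum_ext n e x : (x < b ^ n)%N -> dsum (n + e) x = dsum n x.
Proof.
move=> hx; elim: e => [|e IH]; first by rewrite addn0.
rewrite addnS /dsum big_ord_recr /= -/(dsum _ _) IH divn_small ?mod0n ?addn0 //.
by apply: (leq_trans hx); rewrite leq_exp2l //; lia.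
Qed.

Let sdig_dsum n x : (x < b ^ n)%N -> sdig b x = dsum n x.
Proof.
move=> hx; have hx' : (x < b ^ x.+1)%N by apply: ltn_trans (ltn_expl _ hb).
rewrite /sdig -/(dsum _ _).
case: (leqP n x.+1) => h; first by rewrite -(subnKC h) dsum_ext.
by rewrite -(subnKC (ltnW h)) dsum_ext.
Qed.

Lemma sdigS d y : (d < b)%N -> sdig b (d + b * y) = (d + sdig b y)%N.
Proof.
move=> hd; have hy : (y < b ^ y.+1)%N by apply: ltn_trans (ltn_expl _ hb).
rewrite (sdig_dsum hy) (@sdig_dsum y.+2); last by rewrite expnS; nia.
rewrite /dsum big_ord_recl /= expn0 divn1 modn_digit //; congr (_ + _)%N.
by apply: eq_bigr => i _; rewrite /bump /= add1n expnS divnMA divn_digit.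
Qed.

Lemma sdig_block p u w : (w < b ^ u)%N ->
  sdig b (p * b ^ u + w) = (sdig b p + sdig b w)%N.
Proof.
elim: u w => [|u IH] w hw.
  move: hw; rewrite expn0 ltnS leqn0 => /eqP ->.
  by rewrite muln1 addn0 /sdig big_ord1 mod0n addn0.
have hr := ltn_pmod w b_gt0.
rewrite (digit_decomp w).
have -> : (p * b ^ u.+1 + (w %% b + b * (w %/ b))
          = w %% b + b * (p * b ^ u + w %/ b))%N by rewrite expnS; ring.
rewrite !sdigS // IH; first lia.
by rewrite ltn_divLR // mulnC -expnS.
Qed.

End Digits.

Section Exponential.
Variable R : realType.

Lemma eD (x y : R) : e (x + y) = e x * e y.
Proof.
have mulcE (a b c d : R) : (a +i* b) * (c +i* d) = (a * c - b * d) +i* (a * d + b * c).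
  by [].
by rewrite /e mulcE mulrDr cosD sinD; congr (_ +i* _); ring.
Qed.

Lemma e0 : e (0 : R) = 1.
Proof. by rewrite /e mulr0 cos0 sin0. Qed.

Lemma e_nat n : e (n%:R : R) = 1.
Proof.
elim: n => [|n IH]; first exact: e0.
by rewrite -addn1 natrD eD IH mul1r /e mulr1 mulr_natl cos2pi sin2pi.
Qed.

Lemma e_int (z : int) : e (z%:~R : R) = 1.
Proof.
case: z => n; first exact: e_nat.
have h : e (- n.+1%:R) * e n.+1%:R = 1 :> R[i] by rewrite -eD addNr e0.
by rewrite e_nat mulr1 in h; rewrite NegzE mulrNz h.
Qed.

Lemma eDz (x : R) (z : int) : e (x + z%:~R) = e x.
Proof. by rewrite eD e_int mulr1. Qed.

Lemma eMn (n : nat) (x : R) : e (n%:R * x) = e x ^+ n.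
Proof.
elim: n => [|n IH]; first by rewrite mul0r e0 expr0.
by rewrite -addn1 natrD mulrDl mul1r eD IH addn1 exprSr.
Qed.

Definition cabs (z : R[i]) : R := Num.sqrt (complex.Re z ^+ 2 + complex.Im z ^+ 2).

Lemma cabsE (z : R[i]) : `|z| = (cabs z)%:C.
Proof. exact: normc_def. Qed.

Lemma cabs_ge0 (z : R[i]) : 0 <= cabs z.
Proof. exact: sqrtr_ge0. Qed.

Lemma cabsD (z w : R[i]) : cabs (z + w) <= cabs z + cabs w.
Proof. by rewrite -lecR rmorphD /= -!cabsE ler_normD. Qed.

Lemma cabsB (z w : R[i]) : cabs (z - w) <= cabs z + cabs w.
Proof. by rewrite -lecR rmorphD /= -!cabsE -(normrN w) ler_normD. Qed.

Lemma cabsM (z w : R[i]) : cabs (z * w) = cabs z * cabs w.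
Proof. by apply: complexI; rewrite rmorphM /= -!cabsE normrM. Qed.

Lemma cabs_e (x : R) : cabs (e x) = 1.
Proof. by apply: complexI; rewrite -cabsE /e normc_def /= cos2Dsin2 sqrtr1. Qed.

Lemma cabs_ge_Re (z : R[i]) : `|complex.Re z| <= cabs z.
Proof.
rewrite /cabs -sqrtr_sqr ler_sqrt ?addr_ge0 ?sqr_ge0 //.
by rewrite lerDl sqr_ge0.
Qed.

Lemma sqr_cabs (z : R[i]) : cabs z ^+ 2 = complex.Re z ^+ 2 + complex.Im z ^+ 2.
Proof. by rewrite /cabs sqr_sqrtr // addr_ge0 ?sqr_ge0. Qed.

Lemma cabs_sum (I : Type) (r : seq I) (P : pred I) (F : I -> R[i]) :
  cabs (\sum_(i <- r | P i) F i) <= \sum_(i <- r | P i) cabs (F i).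
Proof.
rewrite -lecR rmorph_sum /= -cabsE; apply: le_trans (ler_norm_sum _ _ _) _.
by apply: ler_sum => i _; rewrite cabsE.
Qed.

Lemma cabs_expr_sub1 (w : R[i]) n :
  cabs w = 1 -> cabs (w ^+ n - 1) <= n%:R * cabs (w - 1).
Proof.
move=> hw; elim: n => [|n IH]; first by rewrite expr0 subrr /cabs /= expr0n /= addr0 sqrtr0 mul0r.
have -> : w ^+ n.+1 - 1 = w * (w ^+ n - 1) + (w - 1) by rewrite exprS; ring.
apply: le_trans (cabsD _ _) _; rewrite cabsM hw mul1r -addn1 natrD mulrDl mul1r.
exact: lerD.
Qed.

Lemma cabs_e_sub (x y : R) : cabs (e x - e y) = cabs (e (x - y) - 1).
Proof.
have -> : e x - e y = e y * (e (x - y) - 1) by rewrite mulrBr mulr1 -eD addrCA subrr addr0.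
by rewrite cabsM cabs_e mul1r.
Qed.

Definition round (y : R) : int := Num.floor (y + 1/2).

Lemma round_dist y : `|y - (round y)%:~R| <= 1/2.
Proof.
have h1 := floor_le (y + 1/2); have h2 := floorD1_gt (y + 1/2).
rewrite intrD /= -/(round y) in h1 h2 *.
by rewrite ler_norml; apply/andP; split; lra.
Qed.

Lemma int_norm_lt1 (z : int) : `|(z%:~R : R)| < 1 -> z = 0.
Proof. by rewrite -intr_norm -[1]/((1%:Z)%:~R) ltr_int; case: z => n /=; rewrite ?NegzE; lia. Qed.

Lemma e_near1_round (eps : R) : 0 < eps -> eps <= 1/2 ->
  exists2 del : R, 0 < del &
  forall y : R, cabs (e y - 1) < del -> `|y - (round y)%:~R| < eps.
Proof.
move=> he he2; have hpi := pi_gt0 R.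
have h2pe : 2 * pi * eps <= pi by rewrite mulrAC -[X in _ <= X]mul1r ler_pM2r //; lra.
exists (1 - cos (2 * pi * eps)).
  rewrite subr_gt0 -[X in _ < X]cos0 ltr_cos ?in_itv /= ?lexx ?pi_ge0 ?h2pe //.
  - by rewrite !mulr_gt0.
  - by rewrite !mulr_ge0 // ltW.
move=> y hy; set z := y - (round y)%:~R.
have hz : `|z| <= 1/2 := round_dist y.
rewrite ltNge; apply/negP => hze.
have h1 : 1 - cos (2 * pi * `|z|) <= cabs (e y - 1).
  have -> : e y = e z by rewrite -(eDz z (round y)) subrK.
  apply: le_trans (cabs_ge_Re _); rewrite /= [`|_ - 1|]distrC.
  have -> : cos (2 * pi * z) = cos (2 * pi * `|z|).
    by case: (lerP 0 z) => hz0; [rewrite ger0_norm | rewrite ltr0_norm // mulrN cosN].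
  exact: ler_norm.
have h2 : cos (2 * pi * `|z|) <= cos (2 * pi * eps).
  rewrite le_eqVlt in hze; case/orP: hze => [/eqP -> //|hze]; apply: ltW.
  rewrite ltr_cos ?in_itv /=.
  - by rewrite ltr_pM2l // mulr_gt0.
  - by rewrite !mulr_ge0 // ltW.
  - by have := normr_ge0 z => hz0; apply/andP; split; nra.
lra.
Qed.

End Exponential.

Lemma sum_nat_divmod (V : nmodType) (c N : nat) (h : nat -> V) :
  \sum_(0 <= w < c * N) h w = \sum_(0 <= j < N) \sum_(0 <= d < c) h (d + c * j)%N.
Proof.
elim: N => [|N IH]; first by rewrite muln0 !big_geq.
rewrite big_nat_recr // -IH mulnS addnC (big_cat_nat _ (n := c * N)) ?leq_addr //=.
congr (_ + _); rewrite -[X in \sum_(X <= _ < _) _]add0n big_addn addKn.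
by apply: eq_bigr => i _; rewrite addnC.
Qed.

Section WindowSums.
Variables (b : nat) (D : {set 'I_b}).
Hypothesis hb : (1 < b)%N.

Lemma sum_inC_window (V : nmodType) (phi : nat -> V) u p : (0 < p)%N ->
  \sum_(p * b ^ u <= m < p * b ^ u + b ^ u) (if `[< inC D m >] then phi m else 0) =
  if `[< inC D p >]
  then \sum_(0 <= w < b ^ u) (if Dword D u w then phi (p * b ^ u + w)%N else 0)
  else 0.
Proof.
move=> hp; rewrite -{1}[(p * b ^ u)%N]add0n big_addn addKn.
have blk w : (w < b ^ u)%N -> inC D (w + p * b ^ u) <-> inC D p /\ Dword D u w.
  by rewrite addnC; apply: inC_block.
case: asboolP => hCp.
  apply: eq_big_nat => w /andP [_ hw]; rewrite [(p * _ + w)%N]addnC.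
  case: asboolP => [/(blk w hw) [_ ->] //|hC].
  by case: ifP => // hW; case: hC; apply/(blk w hw).
rewrite big1_seq // => w; rewrite mem_index_iota => /andP [_ hw].
by case: asboolP => // /(blk w hw) [].
Qed.

End WindowSums.

Section WordSums.
Variables (R : realType) (b : nat) (D : {set 'I_b}).
Hypothesis hb : (1 < b)%N.

Definition phase (al be : R) (m : nat) : R[i] := e (m%:R * al + (sdig b m)%:R * be).

Definition FD (x : R) : R[i] := \sum_(d in D) e ((d : nat)%:R * x).

Definition word_sum (be : R) (u p : nat) (al : R) : R[i] :=
  \sum_(0 <= w < b ^ u) (if Dword D u w then phase al be (p * b ^ u + w) else 0).

Lemma sum_is_digit (h : nat -> R[i]) :
  \sum_(0 <= d < b) (if is_digit D d then h d else 0) = \sum_(d in D) h d.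
Proof.
rewrite big_mkord [in RHS]big_mkcond /=; apply: eq_bigr => i _.
have -> // : is_digit D i = (i \in D).
apply/existsP/idP => [[d /andP [hd /eqP hdi]]|hi]; last by exists i; rewrite hi eqxx.
by have -> : i = d by apply: val_inj.
Qed.

Lemma word_sumS be u p al :
  word_sum be u.+1 p al = FD (al + be) * word_sum be u p (b%:R * al).
Proof.
rewrite /word_sum expnS sum_nat_divmod exchange_big /= /FD big_distrl /=.
rewrite -(sum_is_digit (fun d => e (d%:R * (al + be)) * word_sum be u p (b%:R * al))).
apply: eq_big_nat => d /andP [_ hd]; rewrite /=.
under eq_bigr do rewrite modn_digit // divn_digit //.
case: (is_digit D d); last by rewrite big1.
rewrite /word_sum big_distrr /=; apply: eq_bigr => j _.
case: (Dword D u j); last by rewrite mulr0.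
have -> : (p * (b * b ^ u) + (d + b * j) = d + b * (p * b ^ u + j))%N by ring.
rewrite /phase sdigS // -eD; congr e; rewrite !natrD !natrM; ring.
Qed.

Lemma norm_word_sum be u p al :
  `|word_sum be u p al| = \prod_(j < u) `|FD (b%:R ^+ j * al + be)|.
Proof.
elim: u p al => [|u IH] p al.
  by rewrite big_ord0 /word_sum expn0 big_nat1 /= cabsE cabs_e.
rewrite word_sumS normrM IH big_ord_recl /= expr0 mul1r; congr (_ * _).
by apply: eq_bigr => i _; rewrite /bump /= add1n exprSr mulrA.
Qed.

Lemma sum_Dword u :
  \sum_(0 <= w < b ^ u) (if Dword D u w then 1 else 0 : R[i]) = (#|D|%:R) ^+ u.
Proof.
have -> : \sum_(0 <= w < b ^ u) (if Dword D u w then 1 else 0 : R[i]) = word_sum 0 u 0 0.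
  by apply: eq_bigr => w _; case: ifP => // _; rewrite /phase !mulr0 addr0 e0.
rewrite -[word_sum _ _ _ _]ger0_norm; last first.
  by apply: sumr_ge0 => w _; case: ifP => // _; rewrite /phase !mulr0 addr0 e0.
have hF : FD 0 = #|D|%:R by rewrite /FD; under eq_bigr do rewrite mulr0 e0; rewrite sumr_const.
rewrite norm_word_sum; under eq_bigr do rewrite mulr0 addr0 hF.
by rewrite prodr_const card_ord normr_nat.
Qed.

End WordSums.

Section BlockBound.
Variables (K : numDomainType) (V : normedZmodType K).
Variables (T : nat) (h : nat -> V) (c : nat -> K) (H rho : K).
Hypothesis hT : (0 < T)%N.
Hypothesis c_ge0 : forall m, 0 <= c m.
Hypothesis norm_h_le : forall m, `|h m| <= H.
Hypothesis rho_ge0 : 0 <= rho.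
Hypothesis norm_block_le : forall p, (0 < p)%N ->
  `|\sum_(p * T <= m < p * T + T) h m| <= rho * \sum_(p * T <= m < p * T + T) c m.

Let rho_sumc_ge0 X Y : 0 <= rho * \sum_(X <= m < Y) c m.
Proof. by rewrite mulr_ge0 // sumr_ge0. Qed.

Lemma norm_sum_le_blocks p n : (0 < p)%N ->
  `|\sum_(p * T <= m < (p + n) * T) h m| <= rho * \sum_(p * T <= m < (p + n) * T) c m.
Proof.
move=> hp; elim: n => [|n IH]; first by rewrite addn0 !big_geq // normr0 mulr0.
have -> : ((p + n.+1) * T = (p + n) * T + T)%N by ring.
have l1 : (p * T <= (p + n) * T)%N by rewrite leq_mul2r leq_addr orbT.
rewrite !(@big_cat_nat _ _ _ ((p + n) * T) (p * T) ((p + n) * T + T)) ?leq_addr //= mulrDr.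
apply: le_trans (ler_normD _ _) _; apply: lerD => //.
by apply: norm_block_le; lia.
Qed.

Lemma norm_sum_le_length A B : `|\sum_(A <= m < B) h m| <= (B - A)%:R * H.
Proof.
apply: le_trans (ler_norm_sum _ _ _) _; apply: le_trans (ler_sum _ (fun i _ => norm_h_le i)) _.
by rewrite sumr_const_nat mulr_natl.
Qed.

(* Cut [[A, B)] into a partial block at each end and whole blocks between. *)
Lemma norm_sum_le_window A B : (A <= B)%N ->
  `|\sum_(A <= m < B) h m| <= rho * \sum_(A <= m < B) c m + (2 * T)%:R * H.
Proof.
move=> hAB; have H_ge0 : 0 <= H := le_trans (normr_ge0 _) (norm_h_le 0).
set a := (A %/ T).+1%N; set a' := (B %/ T)%N.
have eA := divn_eq A T; have rA := ltn_pmod A hT.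
have eB := divn_eq B T; have rB := ltn_pmod B hT.
have partial X Y : (Y - X <= T)%N -> `|\sum_(X <= m < Y) h m| <= T%:R * H.
  by move=> hXY; apply: le_trans (norm_sum_le_length X Y) _; rewrite ler_wpM2r ?ler_nat.
case: (leqP a' a) => haa'.
  apply: le_trans (norm_sum_le_length A B) _; rewrite -[X in X <= _]add0r lerD //.
  apply: ler_wpM2r => //; rewrite ler_nat.
  have : (a' * T <= a * T)%N by rewrite leq_mul2r haa' orbT.
  rewrite /a /a' in haa' *; nia.
have h1 : (A <= a * T)%N by rewrite /a; nia.
have h2 : (a * T <= a' * T)%N by rewrite leq_mul2r ltnW ?orbT.
have h3 : (a' * T <= B)%N by rewrite /a'; nia.
rewrite !(big_cat_nat h1 (leq_trans h2 h3)) /= !(big_cat_nat h2 h3) /=.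
have hmid := norm_sum_le_blocks (a' - a)%N (ltn0Sn (A %/ T)%N).
rewrite -/a subnKC in hmid; last exact: ltnW.
have t1 := partial A (a * T)%N ltac:(rewrite /a; nia).
have t3 := partial (a' * T)%N B ltac:(rewrite /a'; nia).
have hA := rho_sumc_ge0 A (a * T); have hB := rho_sumc_ge0 (a' * T) B.
set x := T%:R * H; set y := rho * \sum_(a * T <= m < a' * T) c m.
have -> : (2 * T)%:R * H = x + x by rewrite -mulrDl -natrD mul2n addnn.
apply: le_trans (ler_normD _ _) _.
apply: le_trans (lerD t1 (le_trans (ler_normD _ _) (lerD hmid t3))) _.
rewrite !mulrDr.
set zA := rho * _ in hA *; set zB := rho * _ in hB *.
have -> : zA + (y + zB) + (x + x) = (x + (y + x)) + (zA + zB) by ring.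
by rewrite lerDl addr_ge0.
Qed.

End BlockBound.

Section Enumeration.
Variables (b : nat) (D : {set 'I_b}) (k : nat -> nat).
Hypothesis hk_incr : forall n, (k n < k n.+1)%N.
Hypothesis hk_range : forall m, inC D m <-> exists n, k n = m.

Lemma k_le : {homo k : i j / (i <= j)%N}.
Proof. by apply: homo_leq leqnn leq_trans _ => i; apply: ltnW. Qed.

Lemma sum_comp_enum (V : nmodType) (h : nat -> V) M N : (M <= N)%N ->
  \sum_(M <= i < N) h (k i) =
  \sum_(k M <= m < k N) (if `[< inC D m >] then h m else 0).
Proof.
elim: N => [|N IH]; first by rewrite leqn0 => /eqP ->; rewrite !big_geq.
rewrite leq_eqVlt => /orP [/eqP <-|]; first by rewrite !big_geq.
rewrite ltnS => hMN.
rewrite big_nat_recr //= IH // [in RHS](big_cat_nat _ (n := k N)) ?k_le //=.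
congr (_ + _).
rewrite big_ltn // (asboolT (_ : inC D (k N))); last by apply/hk_range; exists N.
rewrite big1_seq ?addr0 // => m; rewrite mem_index_iota => /andP [h1 h2].
case: asboolP => // /hk_range [n en]; exfalso; rewrite -en in h1 h2.
have : (N < n)%N by case: (leqP n N) => // /k_le; lia.
have : (n < N.+1)%N by case: (leqP N.+1 n) => // /k_le; lia.
lia.
Qed.

End Enumeration.

Section DigitPolynomial.
Variables (R : realType) (b : nat) (D : {set 'I_b}).
Local Notation q := (#|D|%:R : R).

Lemma cabs_FD_le (x : R) : cabs (FD D x) <= q.
Proof.
apply: le_trans (cabs_sum _ _ _) _.
by under eq_bigr do rewrite cabs_e; rewrite sumr_const.
Qed.

(* Removing two digits from [F] costs at most [2], and the pair
   [z1 + z2] has modulus [2] only if [z1 = z2] (parallelogram law). *)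
Lemma cabs_sub_digit_le (d1 d2 : 'I_b) (x : R) : d1 \in D -> d2 \in D -> d1 != d2 ->
  cabs (e ((d1 : nat)%:R * x) - e ((d2 : nat)%:R * x)) ^+ 2 <= 4 * (q - cabs (FD D x)).
Proof.
move=> h1 h2 h12.
set z1 := e ((d1 : nat)%:R * x); set z2 := e ((d2 : nat)%:R * x).
have split_D (V : nmodType) (F : 'I_b -> V) :
    \sum_(i in D) F i = F d1 + F d2 + \sum_(i in D | (i != d1) && (i != d2)) F i.
  rewrite (bigD1 d1) //= (bigD1 d2) /=; last by rewrite h2 eq_sym.
  by rewrite addrA; congr (_ + _); apply: eq_bigl => i; rewrite andbA.
have hrest : cabs (FD D x) <= cabs (z1 + z2) + (q - 2).
  have -> : q = \sum_(i in D) 1 by rewrite sumr_const.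
  rewrite /FD !split_D.
  apply: le_trans (cabsD _ _) _; rewrite -/z1 -/z2 (_ : forall S : R, 1 + 1 + S - 2 = S); last by move=> S; ring.
  apply: lerD => //.
  by apply: le_trans (cabs_sum _ _ _) _; under eq_bigr do rewrite cabs_e.
have hpar : cabs (z1 - z2) ^+ 2 + cabs (z1 + z2) ^+ 2 = 4.
  have parallelogram (w1 w2 : R[i]) : cabs w1 = 1 -> cabs w2 = 1 ->
      cabs (w1 - w2) ^+ 2 + cabs (w1 + w2) ^+ 2 = 4.
    move=> /(congr1 (fun t => t ^+ 2)) + /(congr1 (fun t => t ^+ 2)).
    by rewrite !sqr_cabs expr1n; case: w1 => a1 b1; case: w2 => a2 b2 /= s1 s2; nra.
  exact: parallelogram (cabs_e _) (cabs_e _).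
have hsum : cabs (z1 + z2) <= 2 by apply: le_trans (cabsD _ _) _; rewrite !cabs_e; lra.
have := cabs_ge0 (z1 + z2); nra.
Qed.

End DigitPolynomial.

Section ECvg1.
Variable R : realType.

Definition e_cvg1 (X : nat -> R) (n : nat) : Prop :=
  forall eta : R, 0 < eta ->
  exists J, forall j, (J <= j)%N -> cabs (e (n%:R * X j) - 1) < eta.

Lemma e_cvg10 X : e_cvg1 X 0.
Proof.
move=> eta he; exists 0%N => j _.
by rewrite mul0r e0 subrr /cabs /= expr0n /= addr0 sqrtr0.
Qed.

Let e_cvg1_le X a c n :
  e_cvg1 X a -> e_cvg1 X c ->
  (forall j, cabs (e (n%:R * X j) - 1)
             <= cabs (e (a%:R * X j) - 1) + cabs (e (c%:R * X j) - 1)) ->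
  e_cvg1 X n.
Proof.
move=> Ha Hc Hle eta he.
have [J1 H1] := Ha _ (divr_gt0 he (ltr0n R 2)); have [J2 H2] := Hc _ (divr_gt0 he (ltr0n R 2)).
exists (maxn J1 J2) => j hj; apply: le_lt_trans (Hle j) _.
have := H1 j (leq_trans (leq_maxl _ _) hj); have := H2 j (leq_trans (leq_maxr _ _) hj).
lra.
Qed.

Lemma e_cvg1D X a c : e_cvg1 X a -> e_cvg1 X c -> e_cvg1 X (a + c).
Proof.
move=> Ha Hc; apply: (e_cvg1_le Ha Hc) => j; rewrite natrD mulrDl eD.
have -> : e (a%:R * X j) * e (c%:R * X j) - 1 =
   e (a%:R * X j) * (e (c%:R * X j) - 1) + (e (a%:R * X j) - 1) by ring.
by apply: le_trans (cabsD _ _) _; rewrite cabsM cabs_e mul1r addrC.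
Qed.

Lemma e_cvg1B X a c : (c <= a)%N -> e_cvg1 X a -> e_cvg1 X c -> e_cvg1 X (a - c).
Proof.
move=> hca Ha Hc; apply: (e_cvg1_le Ha Hc) => j.
rewrite natrB // mulrBl -cabs_e_sub.
have -> : e (a%:R * X j) - e (c%:R * X j) = (e (a%:R * X j) - 1) - (e (c%:R * X j) - 1)
  by ring.
exact: cabsB.
Qed.

Lemma e_cvg1M X a n : e_cvg1 X a -> e_cvg1 X (n * a).
Proof.
move=> Ha; elim: n => [|n IH]; first by rewrite mul0n; apply: e_cvg10.
by rewrite mulSn; apply: e_cvg1D.
Qed.

Lemma e_cvg1_gcd X a c : e_cvg1 X a -> e_cvg1 X c -> e_cvg1 X (gcdn a c).
Proof.
move=> Ha Hc; case: (posnP a) => [->|ha]; first by rewrite gcd0n.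
case: (egcdnP c ha) => km kn hkm _.
have -> : gcdn a c = (km * a - kn * c)%N by rewrite hkm addKn.
by apply: e_cvg1B; [rewrite hkm leq_addr | apply: e_cvg1M..].
Qed.

End ECvg1.

Section SgcdResonance.
Variables (R : realType) (b : nat) (D : {set 'I_b}).
Local Notation q := (#|D|%:R : R).

(* If [|F(X j)|] tends to its maximum [q], then every difference of two
   digits, hence their gcd [s], makes [e (s X j)] tend to [1]. *)
Lemma e_cvg1_sgcd (X : nat -> R) :
  (forall eta : R, 0 < eta ->
     exists J, forall j, (J <= j)%N -> q - cabs (FD D (X j)) < eta) ->
  e_cvg1 X (sgcd D).
Proof.
move=> Hq.
have Hpair (d1 d2 : 'I_b) : d1 \in D -> d2 \in D -> (d2 < d1)%N -> e_cvg1 X (d1 - d2).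
  move=> h1 h2 hlt eta he.
  have [J HJ] := Hq _ (divr_gt0 (exprn_gt0 2 he) (ltr0n R 4)).
  exists J => j hj.
  have hne : d1 != d2 by rewrite neq_ltn hlt orbT.
  have := cabs_sub_digit_le (X j) h1 h2 hne.
  rewrite cabs_e_sub -mulrBl -natrB ?(ltnW hlt) //.
  have := HJ j hj; have := cabs_ge0 (e ((d1 - d2)%N%:R * X j) - 1).
  move=> h0 hb1 hsq; have : cabs (e ((d1 - d2)%N%:R * X j) - 1) ^+ 2 < eta ^+ 2 by lra.
  by rewrite ltr_pXn2r // nnegrE ltW.
rewrite /sgcd; apply: big_ind => [|x y|d1 h1]; [exact: e_cvg10 | exact: e_cvg1_gcd |].
apply: big_ind => [|x y|d2 h2]; [exact: e_cvg10 | exact: e_cvg1_gcd |].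
case: (ltngtP d1 d2) => h.
- by rewrite (_ : (_ + _ = d2 - d1)%N); [apply: Hpair | lia].
- by rewrite (_ : (_ + _ = d1 - d2)%N); [apply: Hpair | lia].
- by rewrite (_ : (_ + _ = 0)%N); [apply: e_cvg10 | lia].
Qed.

End SgcdResonance.

Lemma natr_geom (R : comPzRingType) (b u : nat) :
  ((\sum_(i < u) b ^ i)%N%:R : R) * (b%:R - 1) = b%:R ^+ u - 1.
Proof.
rewrite subrX1 mulrC natr_sum; congr (_ * _).
by apply: eq_bigr => i _; rewrite natrX.
Qed.

Section ResonanceCriterion.
Variables (R : realType) (b : nat).
Hypothesis hb : (1 < b)%N.

Let b_gt1 : (1 : R) < b%:R. Proof. by rewrite ltr1n. Qed.

Lemma round_eq_of_dist_small (c : R) :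
  (forall eps : R, 0 < eps -> eps <= 1/2 -> `|c - (round c)%:~R| < eps) ->
  c = (round c)%:~R.
Proof.
move=> H; apply/eqP; rewrite -subr_eq0 -normr_eq0; apply/negPn/negP => hne.
have hp : 0 < `|c - (round c)%:~R| by rewrite lt_neqAle eq_sym hne normr_ge0.
have := H (Num.min `|c - (round c)%:~R| (1/2)).
rewrite lt_min hp ge_min lexx orbT /= => /(_ (divr_gt0 ltr01 (ltr0n R 2)) isT).
by rewrite lt_min ltxx.
Qed.

Section AffineOrbit.
Variables (Y : nat -> R) (c : R).
Hypothesis Y_rec : forall j, Y j.+1 - b%:R * Y j = c.
Hypothesis Y_cvg : e_cvg1 Y 1.

(* [c = Y (j+1) - b Y j] while both [e (Y (j+1))] and [e (b Y j)] tend to [1]. *)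
Lemma affine_drift_int : c = (round c)%:~R.
Proof.
apply: round_eq_of_dist_small => eps he he2; have := b_gt1 => hb1.
have [del hdel Hd] := e_near1_round he he2; apply: Hd.
have hd2 : 0 < del / (b%:R + 1) by rewrite divr_gt0 //; lra.
have [J HJ] := Y_cvg hd2.
have := HJ J (leqnn _); have := HJ J.+1 (leqnSn _); rewrite !mul1r => h2 h1.
rewrite -(Y_rec J) -cabs_e_sub.
have -> : e (Y J.+1) - e (b%:R * Y J) = (e (Y J.+1) - 1) - (e (b%:R * Y J) - 1) by ring.
apply: le_lt_trans (cabsB _ _) _; rewrite eMn.
have := cabs_expr_sub1 b (cabs_e (Y J)); have := cabs_ge0 (e (Y J) - 1).
have -> : del = (b%:R + 1) * (del / (b%:R + 1)) by field; lra.
nra.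
Qed.

(* The distance [z j] from [Y j] to the nearest integer eventually obeys
   [z (j+1) = b z j] while staying below [1/(2b)], which forces it to vanish. *)
Lemma affine_orbit_int : exists J, Y J = (round (Y J))%:~R.
Proof.
have := b_gt1 => hb1; set eps0 : R := 1 / (2 * b%:R).
have he0 : 0 < eps0 by rewrite /eps0 divr_gt0 //; lra.
have he0' : eps0 <= 1/2 by rewrite /eps0 ler_pdivrMr; [rewrite mulrC mulrA; nra | lra].
have hbe : b%:R * eps0 = 1/2 by rewrite /eps0; field; lra.
have [del hdel Hd] := e_near1_round he0 he0'.
have [J HJ] := Y_cvg hdel; exists J.
set z := fun j => Y j - (round (Y j))%:~R.
have hz j : (J <= j)%N -> `|z j| < eps0.
  by move=> hj; apply: Hd; rewrite -[Y j]mul1r; apply: HJ.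
have hrec j : (J <= j)%N -> z j.+1 = b%:R * z j.
  move=> hj; set w := (round c - round (Y j.+1) + b%:Z * round (Y j))%R.
  have hw : z j.+1 - b%:R * z j = w%:~R.
    rewrite /z /w !intrD intrM intrN /= -affine_drift_int -(Y_rec j); ring.
  have hw1 : `|(w%:~R : R)| < 1.
    rewrite -hw; apply: le_lt_trans (ler_normB _ _) _.
    rewrite normrM ger0_norm ?ler0n //.
    have := hz j hj; have := hz j.+1 (leqW hj) => h1 h2.
    have : b%:R * `|z j| < 1/2 by rewrite -hbe ltr_pM2l //; lra.
    lra.
  by apply/eqP; rewrite -subr_eq0 hw (int_norm_lt1 hw1).
have hpow m : z (J + m)%N = b%:R ^+ m * z J.
  elim: m => [|m IH]; first by rewrite addn0 expr0 mul1r.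
  by rewrite addnS hrec ?leq_addr // IH exprS mulrA.
apply/eqP; rewrite -subr_eq0; apply/negPn/negP => hne.
have hp : 0 < `|z J| by rewrite normr_gt0.
have hpos : 0 <= `|z J|^-1 by rewrite invr_ge0 ltW.
have hab := archi_boundP hpos.
set n := Num.Def.archi_bound _ in hab.
have hnb : (n%:R : R) <= b%:R ^+ n by rewrite -natrX ler_nat ltnW // ltn_expl.
have := hz (J + n)%N (leq_addr _ _); rewrite hpow normrM normrX ger0_norm ?ler0n //.
have h1 : 1 < n%:R * `|z J| by rewrite -ltr_pdivrMr // div1r.
have h2 : n%:R * `|z J| <= b%:R ^+ n * `|z J| by rewrite ler_pM2r.
lra.
Qed.

End AffineOrbit.

Lemma resonant_of_ints (A B : R) (a n : int) (J : nat) :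
  (1 - b%:R) * B = a%:~R -> b%:R ^+ J * A + B = n%:~R -> resonant b A B.
Proof.
move=> hB hA; have := b_gt1 => hb1.
have hb1' : b%:R - 1 != (0 : R) by rewrite subr_eq0 gt_eqF.
have hbJ : b%:R ^+ J != (0 : R) by rewrite expf_neq0 // gt_eqF //; lra.
have eB : B = - (a%:~R / (b%:R - 1)) by rewrite -hB; field.
exists a, (n - a * (\sum_(i < J) b ^ i)%N%:Z)%R, J%:Z; split; last first.
  by exists 0; rewrite addr0.
exists 0; rewrite addr0 intrB intrM /= -[(b%:R : R) ^ J%:Z]/(b%:R ^+ J).
have -> : A = (n%:~R - B) / b%:R ^+ J by rewrite -hA; field.
have -> : ((\sum_(i < J) b ^ i)%N%:Z%:~R : R) = (b%:R ^+ J - 1) / (b%:R - 1).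
  by rewrite -(natr_geom R b J) mulfK.
by rewrite eB; field; rewrite hbJ hb1'.
Qed.

Lemma resonant_of_e_cvg1 (A B : R) :
  e_cvg1 (fun j => b%:R ^+ j * A + B) 1 -> resonant b A B.
Proof.
set Y := fun j => b%:R ^+ j * A + B.
have Y_rec j : Y j.+1 - b%:R * Y j = (1 - b%:R) * B by rewrite /Y exprS; ring.
move=> hY; have [J hJ] := affine_orbit_int Y_rec hY.
exact: resonant_of_ints (affine_drift_int Y_rec hY) hJ.
Qed.

End ResonanceCriterion.

Section ProductDecay.
Variable R : realType.

Lemma expr_le_small (x eps : R) : `|x| < 1 -> 0 < eps -> exists m, x ^+ m <= eps.
Proof.
move=> hx he; have /cvgr_dist_lt /(_ _ he) [N _ hN] := cvg_expr hx.
exists N; have := hN N (leqnn N); rewrite /= sub0r normrN => /ltW.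
exact: le_trans (ler_norm _).
Qed.

Lemma prod_le_prefix (G : nat -> R) u v : (forall j, 0 <= G j <= 1) -> (u <= v)%N ->
  \prod_(0 <= j < v) G j <= \prod_(0 <= j < u) G j.
Proof.
move=> hG huv; rewrite (big_cat_nat _ (n := u)) //=.
have h1 : 0 <= \prod_(0 <= j < u) G j by apply: prodr_ge0 => j _; case/andP: (hG j).
have h2 : \prod_(u <= j < v) G j <= 1 by apply: prodr_ile1 => j _; apply: hG.
have h3 : 0 <= \prod_(u <= j < v) G j by apply: prodr_ge0 => j _; case/andP: (hG j).
nra.
Qed.

Lemma prod_le_small (G : nat -> R) (eta : R) : (forall j, 0 <= G j <= 1) -> 0 < eta ->
  (forall J, exists2 j, (J <= j)%N & G j <= 1 - eta) ->
  forall eps, 0 < eps -> exists u, \prod_(0 <= j < u) G j <= eps.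
Proof.
move=> hG he Hinf eps hep.
have heta1 : eta <= 1 by have [j _] := Hinf 0%N; case/andP: (hG j) => h0 _; lra.
have step m : exists u, \prod_(0 <= j < u) G j <= (1 - eta) ^+ m.
  elim: m => [|m [u hu]]; first by exists 0%N; rewrite big_geq // expr0.
  have [j hj hGj] := Hinf u.
  exists j.+1; rewrite big_nat_recr //= exprS.
  have := prod_le_prefix hG hj.
  have h0 : 0 <= \prod_(0 <= i < j) G i by apply: prodr_ge0 => i _; case/andP: (hG i).
  have h1 : 0 <= G j by case/andP: (hG j).
  have h2 : 0 <= (1 - eta) ^+ m by rewrite exprn_ge0 // subr_ge0.
  nra.
have [|m hm] := @expr_le_small (1 - eta) eps _ hep.
  by rewrite ger0_norm; lra.
by have [u hu] := step m; exists u; apply: le_trans hm.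
Qed.

End ProductDecay.

Section RieszProduct.
Variables (R : realType) (b : nat) (D : {set 'I_b}).
Hypothesis hb : (1 < b)%N.
Hypothesis hD : (2 <= #|D|)%N.
Local Notation q := (#|D|%:R : R).

Lemma FD_cvg_max_of_prod_large (X : nat -> R) (eps : R) : 0 < eps ->
  (forall u, eps * q ^+ u < \prod_(j < u) cabs (FD D (X j))) ->
  forall eta : R, 0 < eta ->
  exists J, forall j, (J <= j)%N -> q - cabs (FD D (X j)) < eta.
Proof.
move=> he Hall eta heta; apply: NNPP => Hn.
have hq : (0 : R) < q by rewrite ltr0n; lia.
set G := fun j => cabs (FD D (X j)) / q.
have hG j : 0 <= G j <= 1.
  rewrite /G divr_ge0 ?cabs_ge0 ?(ltW hq) //= ler_pdivrMr // mul1r.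
  exact: cabs_FD_le.
have Hinf J : exists2 j, (J <= j)%N & G j <= 1 - eta / q.
  have [j hj] := not_all_ex_not _ _ (not_ex_all_not _ _ Hn J).
  have [hJj /negP] := imply_to_and _ _ hj; rewrite -leNgt => h.
  by exists j => //; rewrite /G ler_pdivrMr // mulrBl mul1r divfK ?gt_eqF //; lra.
have [u] := prod_le_small hG (divr_gt0 heta hq) Hinf he.
rewrite /G prodf_div prodr_const_nat subn0 ler_pdivrMr ?exprn_gt0 // big_mkord.
by have := Hall u; lra.
Qed.

Lemma prod_FD_small (al be : R) :
  ~ resonant b ((sgcd D)%:R * al) ((sgcd D)%:R * be) ->
  forall eps : R, 0 < eps -> exists u,
    \prod_(j < u) cabs (FD D (b%:R ^+ j * al + be)) <= eps * q ^+ u.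
Proof.
move=> Hnr eps he; apply: NNPP => Hno; apply: Hnr.
have Hall u : eps * q ^+ u < \prod_(j < u) cabs (FD D (b%:R ^+ j * al + be)).
  by rewrite ltNge; apply/negP => h; apply: Hno; exists u.
have := e_cvg1_sgcd (@FD_cvg_max_of_prod_large (fun j => b%:R ^+ j * al + be) _ he Hall).
move=> HQ; apply: (resonant_of_e_cvg1 hb) => eta heta.
have [J HJ] := HQ _ heta; exists J => j /HJ.
by rewrite mul1r mulrDr mulrCA.
Qed.

End RieszProduct.

Section ResonantOrbit.
Variables (R : realType) (b : nat) (D : {set 'I_b}).
Hypothesis hb : (1 < b)%N.

Lemma resonant_natE (A B : R) : resonant b A B -> exists (a r m1 m2 : int) (t : nat),
  A = a%:~R / (b%:R - 1) + r%:~R / b%:R ^+ t + m1%:~R /\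
  B = - (a%:~R / (b%:R - 1)) + m2%:~R.
Proof.
case=> a [r [[n|n] [[m1 h1] [m2 h2]]]]; first by exists a, r, m1, m2, n.
exists a, (r * (b ^ n.+1)%N%:Z)%R, m1, m2, 0%N; split=> //.
rewrite h1 expr0 divr1 intrM /=; congr (_ + _ + _).
by rewrite -[(b%:R : R) ^ Negz n]/((b%:R ^+ n.+1)^-1) invrK -natrX.
Qed.

(* At resonance, [e (s (b^u al + be))] is exactly [1] once [b^u] clears
   the denominator [b^t]. *)
Lemma e_resonant_orbit (s : nat) (al be : R) a r m1 m2 t :
  s%:R * al = a%:~R / (b%:R - 1) + r%:~R / b%:R ^+ t + m1%:~R ->
  s%:R * be = - (a%:~R / (b%:R - 1)) + m2%:~R ->
  forall u, (t <= u)%N -> e (s%:R * (b%:R ^+ u * al + be)) = 1.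
Proof.
move=> h1 h2 u htu; rewrite -(subnKC htu); set w := (u - t)%N.
have hb1 : b%:R - 1 != (0 : R) by rewrite subr_eq0 pnatr_eq1 eq_sym ltn_eqF.
have hbt : b%:R ^+ t != (0 : R) by rewrite expf_neq0 // pnatr_eq0 -lt0n ltnW.
have -> : s%:R * (b%:R ^+ (t + w) * al + be) =
    ((a * (\sum_(i < t + w) b ^ i)%N%:Z + r * (b ^ w)%N%:Z
      + (b ^ (t + w))%N%:Z * m1 + m2)%R)%:~R.
  rewrite !intrD !intrM /= -!pmulrn !natrX.
  have -> : ((\sum_(i < t + w) b ^ i)%N%:R : R) = (b%:R ^+ (t + w) - 1) / (b%:R - 1).
    by rewrite -(natr_geom R b (t + w)) mulfK.
  by rewrite mulrDr mulrCA h1 h2 exprD; field; rewrite hbt hb1.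
exact: e_int.
Qed.

Lemma e_Dword_resonant (s : nat) (al be : R) t :
  (forall d, d \in D -> (s %| d)%N) ->
  (forall u, (t <= u)%N -> e (s%:R * (b%:R ^+ u * al + be)) = 1) ->
  forall v p, Dword D v p -> forall u, (t <= u)%N ->
  e (p%:R * (b%:R ^+ u * al) + (sdig b p)%:R * be) = 1.
Proof.
move=> hdvd hE; elim=> [|v IH] p /=.
  by move/eqP=> -> u _; rewrite /sdig big_ord1 div0n mod0n !mul0r addr0 e0.
case/andP=> /existsP [d0 /andP [hd0 /eqP ed]] hW u htu.
have hd : (p %% b < b)%N by apply: ltn_pmod; apply: ltnW.
rewrite (digit_decomp b p) sdigS // -ed.
have -> : (d0 + b * (p %/ b))%N%:R * (b%:R ^+ u * al) + (d0 + sdig b (p %/ b))%N%:R * be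
  = (d0 : nat)%:R * (b%:R ^+ u * al + be)
    + ((p %/ b)%N%:R * (b%:R ^+ u.+1 * al) + (sdig b (p %/ b))%:R * be).
  by rewrite !natrD natrM exprS; ring.
rewrite eD IH ?leqW // mulr1.
have [c ->] : exists c, (d0 : nat) = (c * s)%N by apply/dvdnP; apply: hdvd.
by rewrite natrM -mulrA eMn hE // expr1n.
Qed.

End ResonantOrbit.

Section WindowBounds.
Variables (R : realType) (b : nat) (D : {set 'I_b}) (k : nat -> nat).
Hypothesis hb : (1 < b)%N.
Hypothesis hD : (2 <= #|D|)%N.
Hypothesis hk_incr : forall n, (k n < k n.+1)%N.
Hypothesis hk_range : forall m, inC D m <-> exists n, k n = m.
Local Notation q := (#|D|%:R : R).

Definition phaseC (al be : R) (m : nat) : R[i] :=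
  if `[< inC D m >] then phase b al be m else 0.

Definition indC (m : nat) : R[i] := if `[< inC D m >] then 1 else 0.

Lemma indC_ge0 m : 0 <= indC m.
Proof. by rewrite /indC; case: ifP. Qed.

Lemma norm_phaseC_le1 al be m : `|phaseC al be m| <= 1.
Proof. by rewrite /phaseC; case: ifP => _; rewrite ?normr0 // cabsE cabs_e. Qed.

Lemma sum_term_phaseC al be M N : (M <= N)%N ->
  \sum_(M <= i < N) term b k al be i = \sum_(k M <= m < k N) phaseC al be m.
Proof. by move=> h; exact: (sum_comp_enum hk_incr hk_range (phase b al be) h). Qed.

Lemma sum_indC M N : (M <= N)%N -> \sum_(k M <= m < k N) indC m = (N - M)%:R.
Proof.
move=> h; rewrite -(sum_comp_enum hk_incr hk_range (fun _ => (1 : R[i])) h).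
by rewrite sumr_const_nat.
Qed.

Lemma sum_indC_window u p : (0 < p)%N ->
  \sum_(p * b ^ u <= m < p * b ^ u + b ^ u) indC m =
  if `[< inC D p >] then (q ^+ u)%:C else 0.
Proof.
move=> hp; rewrite /indC sum_inC_window //; case: ifP => // _.
by rewrite sum_Dword // rmorphXn /= rmorph_nat.
Qed.

Lemma norm_sum_term_nonresonant (al be : R) :
  ~ resonant b ((sgcd D)%:R * al) ((sgcd D)%:R * be) ->
  forall eps : R, 0 < eps -> exists K : R, forall M N, (M <= N)%N ->
  `|\sum_(M <= i < N) term b k al be i| <= (eps * (N - M)%:R + K)%:C.
Proof.
move=> Hnr eps he; have [u hu] := prod_FD_small hb hD Hnr he.
exists ((2 * b ^ u)%:R) => M N hMN.
rewrite sum_term_phaseC // rmorphD rmorphM /= !rmorph_nat -sum_indC //.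
have hbu : (0 < b ^ u)%N by rewrite expn_gt0 ltnW.
rewrite -[X in _ <= _ + X]mulr1; apply: (norm_sum_le_window hbu indC_ge0);
  [exact: norm_phaseC_le1 | by rewrite ler0c ltW | | exact: k_le].
move=> p hp; rewrite sum_indC_window // /phaseC sum_inC_window //.
case: ifP => _; last by rewrite normr0 mulr0.
rewrite -/(word_sum D be u p al) norm_word_sum // -rmorphM.
have -> : \prod_(j < u) `|FD D (b%:R ^+ j * al + be)|
          = (\prod_(j < u) cabs (FD D (b%:R ^+ j * al + be)))%:C.
  by rewrite rmorph_prod; apply: eq_bigr => j _; rewrite cabsE.
by rewrite lecR.
Qed.

(* At resonance every full window of [C] contributes [Lam] times its size. *)
Lemma norm_sum_term_resonant (s : nat) (al be : R) :
  (forall d, d \in D -> (s %| d)%N) ->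
  resonant b (s%:R * al) (s%:R * be) ->
  exists (Lam : R[i]) (K : R), forall N,
    `|\sum_(0 <= i < N) term b k al be i - Lam * N%:R| <= K%:C.
Proof.
move=> hdvd hres.
have [a [r [m1 [m2 [t [h1 h2]]]]]] := resonant_natE hres.
have hE := e_resonant_orbit hb h1 h2.
set T := (b ^ t)%N; have hT : (0 < T)%N by rewrite expn_gt0 ltnW.
set Sf := \sum_(0 <= w < T) (if Dword D t w then phase b al be w else 0).
have hq0 : (q ^+ t)%:C != 0 :> R[i].
  by apply/eqP => /(@complexI R _ 0) /eqP; rewrite expf_eq0 pnatr_eq0 => /andP [_ /eqP]; lia.
exists (Sf / (q ^+ t)%:C), ((2 * T)%:R * (1 + cabs (Sf / (q ^+ t)%:C))) => N.
set Lam := Sf / _.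
have hh m : `|phaseC al be m - Lam * indC m| <= 1 + `|Lam|.
  apply: le_trans (ler_normB _ _) _; rewrite lerD ?norm_phaseC_le1 // normrM.
  by rewrite -[X in _ <= X]mulr1 ler_wpM2l // /indC; case: ifP; rewrite ?normr1 ?normr0.
have hblock p : (0 < p)%N ->
    `|\sum_(p * T <= m < p * T + T) (phaseC al be m - Lam * indC m)|
    <= 0 * \sum_(p * T <= m < p * T + T) indC m.
  move=> hp; rewrite mul0r sumrB -mulr_sumr sum_indC_window // /phaseC sum_inC_window //.
  case: asboolP => hCp; last by rewrite mulr0 subr0 normr0.
  have -> : \sum_(0 <= w < b ^ t)
      (if Dword D t w then phase b al be (p * b ^ t + w) else 0) = Sf.
    apply: eq_big_nat => w /andP [_ hw]; case: ifP => // _.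
    have [v _ hv] := (inCP D hb p).1 hCp.
    have := e_Dword_resonant hb hdvd hE hv (leqnn t).
    rewrite /phase sdig_block // !natrD natrM natrX => hu.
    by rewrite -[RHS]mulr1 -hu -eD; congr e; ring.
  by rewrite /Lam divfK // subrr normr0.
have := norm_sum_le_window hT indC_ge0 hh (lexx 0) hblock (k_le hk_incr (leq0n N)).
rewrite mul0r add0r sum_term_phaseC // -[N in Lam * N%:R]subn0 -sum_indC //.
rewrite mulr_sumr -sumrB => H; apply: le_trans H _.
have cK (n : nat) (x : R) : ((n%:R * (1 + x))%:C : R[i]) = n%:R * (1 + x%:C).
  by rewrite rmorphM rmorph_nat rmorphD rmorph1.
by rewrite cK cabsE.
Qed.

End WindowBounds.

Section Averages.
Variable R : realType.
Local Notation C := R[i].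

Lemma gtc0_real (eps : C) : 0 < eps -> exists2 r : R, 0 < r & eps = r%:C.
Proof.
rewrite ltcE => /andP [/eqP hi hr]; exists (complex.Re eps) => //.
by rewrite [LHS]complexE hi /= mulr0 addr0.
Qed.

Lemma avg_cvg_of_bound (u : nat -> C) (Lam : C) (K : R) :
  (forall N, `|\sum_(0 <= i < N) u i - Lam * N%:R| <= K%:C) ->
  (fun N => (N%:R)^-1 * \sum_(i < N) u i) @ \oo --> (Lam : C^o).
Proof.
move=> HB; apply/(@cvgrPdist_lt _ C^o) => eps /gtc0_real [e' he' ->].
have hK : 0 <= K by have := HB 0%N; rewrite big_geq // mulr0 subrr normr0 lecR.
have hab := archi_boundP (divr_ge0 hK (ltW he')).
exists (Num.Def.archi_bound (K / e')).+1 => // N /= hN.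
have hNR : (0 : R) < N%:R by rewrite ltr0n; apply: leq_trans hN.
have hNC : (N%:R : C) != 0 by rewrite pnatr_eq0 -lt0n -(ltr0n R).
have -> : Lam - (N%:R)^-1 * \sum_(i < N) u i
          = - ((N%:R)^-1 * (\sum_(0 <= i < N) u i - Lam * N%:R)).
  by rewrite big_mkord mulrBr mulrCA mulVf // mulr1; ring.
rewrite normrN normrM normfV normr_nat.
apply: le_lt_trans (ler_wpM2l _ (HB N)) _; first by rewrite invr_ge0 ler0n.
rewrite mulrC -(rmorph_nat (real_complex R)) -fmorph_div ltcR ltr_pdivrMr //.
rewrite mulrC -ltr_pdivrMr //; apply: lt_le_trans hab _.
by rewrite ler_nat ltnW.
Qed.

Lemma window_avg_small_of_bound (u : nat -> C) :
  (forall eps : R, 0 < eps -> exists K : R, forall M N, (M <= N)%N ->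
     `|\sum_(M <= i < N) u i| <= (eps * (N - M)%:R + K)%:C) ->
  forall eta : R, 0 < eta -> exists L : nat, forall M N : nat,
    (M < N)%N -> (L <= N - M)%N ->
    `|((N - M)%:R)^-1 * \sum_(M <= i < N) u i| < eta%:C.
Proof.
move=> HB eta heta.
have he2 : 0 < eta / 2 by rewrite divr_gt0.
have [K HK] := HB _ he2.
have hK : 0 <= K.
  by have := HK 0%N 0%N (leqnn _); rewrite big_geq // normr0 subnn mulr0 add0r lecR.
have hab := archi_boundP (divr_ge0 hK (ltW he2)).
exists (Num.Def.archi_bound (K / (eta / 2))).+1 => M N hMN hL.
set n := (N - M)%N in hL *.
have hNR : (0 : R) < n%:R by rewrite ltr0n; apply: leq_trans hL.
rewrite normrM normfV normr_nat.
apply: le_lt_trans (ler_wpM2l _ (HK M N (ltnW hMN))) _; first by rewrite invr_ge0 ler0n.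
rewrite mulrC -(rmorph_nat (real_complex R)) -fmorph_div ltcR ltr_pdivrMr //.
have : K / (eta / 2) < n%:R by apply: lt_le_trans hab _; rewrite ler_nat ltnW.
by rewrite ltr_pdivrMr // => h; lra.
Qed.

Lemma avg_cvg0_of_bound (u : nat -> C) :
  (forall eps : R, 0 < eps -> exists K : R, forall M N, (M <= N)%N ->
     `|\sum_(M <= i < N) u i| <= (eps * (N - M)%:R + K)%:C) ->
  (fun N => (N%:R)^-1 * \sum_(i < N) u i) @ \oo --> (0 : C^o).
Proof.
move=> /window_avg_small_of_bound HB.
apply/(@cvgrPdist_lt _ C^o) => eps /gtc0_real [e' he' ->].
have [L HL] := HB _ he'; exists L.+1 => // N /= hN.
have hN0 : (0 < N)%N by apply: leq_trans hN.
rewrite sub0r normrN; have := HL 0%N N hN0; rewrite subn0 big_mkord; apply.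
exact: ltnW.
Qed.

End Averages.

Lemma sgcd_gt0 (b : nat) (D : {set 'I_b}) : (2 <= #|D|)%N -> (0 < sgcd D)%N.
Proof.
move/card_gt1P => [d1 [d2 [h1 h2 h12]]]; rewrite lt0n; apply/negP => /eqP h0.
have : (sgcd D %| (d1 - d2) + (d2 - d1))%N.
  by rewrite /sgcd; apply: (@biggcdn_inf _ d1) => //; apply: (@biggcdn_inf _ d2).
rewrite h0 dvd0n => /eqP h.
by move: h12; rewrite -(inj_eq val_inj) /=; lia.
Qed.

Lemma resonant_rational (R : realType) (b s : nat) (al be : R) : (0 < s)%N ->
  resonant b (s%:R * al) (s%:R * be) -> rational al /\ rational be.
Proof.
move=> hs /resonant_natE [a [r [m1 [m2 [t [h1 h2]]]]]].
have hsR : (s%:R : R) != 0 by rewrite pnatr_eq0 -lt0n.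
split.
  exists ((a%:~R / (b%:R - 1) + r%:~R / b%:R ^+ t + m1%:~R) / s%:R) => //.
  rewrite fmorph_div !rmorphD /= !fmorph_div rmorphB /= !ratr_int rmorphXn /=.
  by rewrite !ratr_nat rmorph1 -h1 mulrC mulKf.
exists ((- (a%:~R / (b%:R - 1)) + m2%:~R) / s%:R) => //.
rewrite fmorph_div !rmorphD /= rmorphN /= !fmorph_div rmorphB /= !ratr_int !ratr_nat.
by rewrite rmorph1 -h2 mulrC mulKf.
Qed.

Section ExponentialSums.
Variables (R : realType) (b : nat) (D : {set 'I_b}) (k : nat -> nat).
Hypothesis hb : (1 < b)%N.
Hypothesis hD : (2 <= #|D|)%N.
Hypothesis hk_incr : forall n, (k n < k n.+1)%N.
Hypothesis hk_range : forall m, inC D m <-> exists n, k n = m.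
Local Notation s := (sgcd D).

Lemma avg_cvg0_nonresonant (al be : R) :
  ~ resonant b (s%:R * al) (s%:R * be) -> avg b k al be @ \oo --> (0 : (R[i])^o).
Proof.
move=> Hnr; apply: avg_cvg0_of_bound => eps he; have [K HK] := norm_sum_term_nonresonant hb hD hk_incr hk_range Hnr he.
by exists K => M N hMN; apply: HK.
Qed.

Lemma avg_cvg_resonant (s' : nat) (al be : R) :
  (forall d, d \in D -> (s' %| d)%N) ->
  resonant b (s'%:R * al) (s'%:R * be) -> cvgn (avg b k al be).
Proof.
move=> hdvd hres.
have [Lam [K HK]] := norm_sum_term_resonant hb hD hk_incr hk_range hdvd hres.
exact: (@cvgP (R[i]^o) _ Lam (avg_cvg_of_bound HK)).
Qed.

Lemma avg_cvg_dvd_sgcd (al be : R) : (forall d, d \in D -> (s %| d)%N) ->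
  cvgn (avg b k al be) /\
  (limn (avg b k al be) != 0 -> resonant b (s%:R * al) (s%:R * be)).
Proof.
move=> hdvd; case: (classic (resonant b (s%:R * al) (s%:R * be))) => Hr.
  by split=> //; apply: avg_cvg_resonant hdvd Hr.
have H0 := avg_cvg0_nonresonant Hr.
by rewrite (cvg_lim (@norm_hausdorff _ (R[i]^o)) H0) eqxx; split=> //; apply: (@cvgP (R[i]^o) _ 0 H0).
Qed.

Lemma window_avg_small_irrational (al be : R) : irrational al \/ irrational be ->
  forall eta : R, 0 < eta -> exists L : nat, forall M N : nat,
    (M < N)%N -> (L <= N - M)%N ->
    `|((N - M)%:R)^-1 * \sum_(M <= i < N) term b k al be i| < eta%:C.
Proof.
move=> hirr; apply: window_avg_small_of_bound => eps he.
have Hnr : ~ resonant b (s%:R * al) (s%:R * be).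
  by move=> /(resonant_rational (sgcd_gt0 hD)) [ra rbe]; case: hirr; apply.
have [K HK] := norm_sum_term_nonresonant hb hD hk_incr hk_range Hnr he.
by exists K => M N hMN; apply: HK.
Qed.

End ExponentialSums.

Unset Implicit Arguments.
Set Strict Implicit.

Theorem mainTheorem6 (R : realType) (b : nat) (D : {set 'I_b}) (k : nat -> nat)
  (hb : (3 <= b)%N) (hD : (2 <= #|D|)%N)
  (hk_incr : forall n, (k n < k n.+1)%N)
  (hk_range : forall m, inC D m <-> exists n, k n = m) :
  let s := sgcd D in
  [/\
   (* (1) *)
   (s = 1%N ->
     forall alpha beta : R,
       cvgn (avg b k alpha beta) /\
       (limn (avg b k alpha beta) != 0 -> resonant b alpha beta)),
   (* (2) *)
   ((1 < s)%N -> (forall d, d \in D -> (s %| d)%N) ->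
     forall alpha beta : R,
       cvgn (avg b k alpha beta) /\
       (limn (avg b k alpha beta) != 0 ->
          resonant b (s%:R * alpha) (s%:R * beta))),
   (* (3) *)
   ((1 < s)%N -> (exists2 d, d \in D & ~~ (s %| d)%N) ->
     forall alpha beta : R,
       ~ resonant b (s%:R * alpha) (s%:R * beta) ->
       avg b k alpha beta @ \oo --> (0 : (R[i])^o))
   &
   (* irrational case: uniform (Banach-type) averages vanish *)
   (forall alpha beta : R, irrational alpha \/ irrational beta ->
     forall eta : R, 0 < eta ->
       exists L : nat, forall M N : nat, (M < N)%N -> (L <= N - M)%N ->
         `| ((N - M)%:R)^-1 * \sum_(M <= i < N) term b k alpha beta i |
           < eta%:C)].
Proof.
move=> s; have hb1 : (1 < b)%N by lia.
split.
- move=> hs1 al be.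
  have := avg_cvg_dvd_sgcd hb1 hD hk_incr hk_range al be.
  by rewrite -/s hs1 mulr1n !mul1r; apply=> d _; apply: dvd1n.
- by move=> _ hdvd al be; apply: avg_cvg_dvd_sgcd.
- by move=> _ _ al be; apply: avg_cvg0_nonresonant.
- by move=> al be; apply: (window_avg_small_irrational hb1 hD hk_incr hk_range).
Qed.
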